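(* For a positive integer $m$, let $C(m)=\{c_1,\dots,c_m\}$ and $v^*_m$ be the vote $c_1\succ c_2\succ\dots\succ c_m$. For integers $0\le k\le m(m-1)/2$ and $j,i\in[m]$, let $T(m,k,j,i)$ be the number of votes over $C(m)$ at swap distance exactly $k$ from $v^*_m$ that rank $c_j$ in position $i$. There is an algorithm that computes $T(m,k,j,i)$ in time polynomial in $m$.
   Context: A vote over a candidate set is a total order (position 1 is the top). The swap distance between two votes is the minimum number of swaps of adjacent candidates needed to transform one into the other (equivalently, the number of candidate pairs ordered differently). *)

From mathcomp Require Import all_boot all_fingroup.
Set Implicit Arguments. Unset Strict Implicit. Unset Printing Implicit Defensive.

(* Candidates of C(m) are c_1..c_m, represented (0-indexed) by 'I_m.
   A vote over C(m) is represented by its ranking permutation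
   r : {perm 'I_m}, where r c is the (0-indexed) position of candidate c
   (position 0 = top).  This is a bijection with total orders on C(m). *)
Definition vote (m : nat) := {perm 'I_m}.

Definition vstar (m : nat) : vote m := 1%g.

Definition swap_dist (m : nat) (u v : vote m) : nat :=
  #|[set p : 'I_m * 'I_m |
      (p.1 < p.2) && ((u p.1 < u p.2) != (v p.1 < v p.2))]|.

(* T(m,k,j,i) with 1-indexed j, i. *)
Definition T (m k j i : nat) : nat :=
  #|[set r : vote m | (swap_dist r (vstar m) == k) &&
       [exists c : 'I_m, (val c == j.-1) && (val (r c) == i.-1)]]|.

(* A random-access machine with unit-cost addition, truncated subtraction,
   constants, indirect addressing and conditional jumps (no multiplication),
   a standard model polynomially equivalent to Turing machines. *)
Inductive instr : Type :=
  | IConst of nat & nat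
  | IAdd of nat & nat & nat
  | ISub of nat & nat & nat
  | ILoad of nat & nat
  | IStore of nat & nat
  | IJz of nat & nat
  | IJmp of nat
  | IHalt.

Definition program := seq instr.
Definition memory := nat -> nat.

Definition upd (M : memory) (r v : nat) : memory :=
  fun x => if x == r then v else M x.

(* One step: None means halted (pc out of range or Halt instruction). *)
Definition step (p : program) (st : nat * memory) : option (nat * memory) :=
  let: (pc, M) := st in
  match nth IHalt p pc with
  | IConst r n => Some (pc.+1, upd M r n)
  | IAdd r a b => Some (pc.+1, upd M r (M a + M b))
  | ISub r a b => Some (pc.+1, upd M r (M a - M b))
  | ILoad r a => Some (pc.+1, upd M r (M (M a)))
  | IStore a b => Some (pc.+1, upd M (M a) (M b))
  | IJz a l => Some (if M a == 0 then l else pc.+1, M)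
  | IJmp l => Some (l, M)
  | IHalt => None
  end.

Fixpoint run (p : program) (fuel : nat) (st : nat * memory) : option memory :=
  match step p st with
  | None => Some st.2
  | Some st' => if fuel is n.+1 then run p n st' else None
  end.

(* Input convention: registers 0..3 hold m, k, j, i; all else 0; pc = 0.
   Output: register 0 at halting time. *)
Definition init4 (a b c d : nat) : nat * memory :=
  (0, fun x => if x == 0 then a else if x == 1 then b
               else if x == 2 then c else if x == 3 then d else 0).

(* Read a vote as its ranking permutation r; its swap distance to v*_m is the
   number of inversions of r.  Putting the top candidate c_1 at position t
   above a vote over the remaining candidates adds exactly t inversions, which
   expresses the counts for candidate c_(j+1) among p+1 candidates through
   those for c_j among p candidates.  Reversing both the candidates and the
   positions preserves inversions and exchanges c_1 with c_p.  So, starting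
   from a single candidate, m - j levels of the recurrence give the counts for
   the last candidate among m - j + 1, the reversal turns them into the counts
   for the first one, and j - 1 more levels give the counts for c_j among m
   candidates.  A level fills O(m^3) entries (k <= m^2), each a sum of O(m)
   earlier ones, so the computation takes O(m^5) steps of a machine that only
   adds and subtracts. *)

From mathcomp Require Import all_boot all_fingroup.
From mathcomp Require Import zify.
Set Implicit Arguments. Unset Strict Implicit. Unset Printing Implicit Defensive.

Definition inversions m (r : {perm 'I_m}) : nat :=
  \sum_(a < m) \sum_(b < m) ((a < b) && (r b < r a)).

Lemma swap_dist_vstar m (r : vote m) : swap_dist r (vstar m) = inversions r.
Proof.
rewrite /swap_dist /inversions cardsE -sum1_card big_mkcond /=.
rewrite -(pair_big xpredT xpredT (fun a b : 'I_m =>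
  if (a < b) && ((r a < r b) != (vstar m a < vstar m b)) then 1 else 0)) /=.
apply: eq_bigr => a _; apply: eq_bigr => b _; rewrite /vstar !perm1.
case: ltnP => //= ab.
have : r a != r b by rewrite (inj_eq perm_inj) neq_ltn ab.
by rewrite neq_ltn; case: ltngtP.
Qed.

Definition vote_count m k c v : nat :=
  \sum_(r : {perm 'I_m})
    ((inversions r == k) && [exists x : 'I_m, (x == c :> nat) && (r x == v :> nat)]).

Lemma T_vote_count m k j i : T m k j i = vote_count m k j.-1 i.-1.
Proof.
rewrite /T /vote_count cardsE -sum1_card big_mkcond /=.
apply: eq_bigr => r _; rewrite unfold_in /= swap_dist_vstar.
by case: (_ && _).
Qed.

Lemma lift_perm0_bij p :
  bijective (fun ts : 'I_p.+1 * {perm 'I_p} => lift_perm ord0 ts.1 ts.2).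
Proof.
apply: inj_card_bij; last by rewrite card_prod !card_Sn card_ord factS.
move=> [t s] [t' s'] /= E.
have Et : t = t' by rewrite -(lift_perm_id ord0 t s) E lift_perm_id.
subst t'; congr (_, _); apply/permP => k.
by apply: (@lift_inj _ t); rewrite -(lift_perm_lift ord0) E lift_perm_lift.
Qed.

Lemma big_perm_lift0 (R : Type) (idx : R) (op : Monoid.com_law idx) p
    (F : {perm 'I_p.+1} -> R) :
  \big[op/idx]_r F r =
  \big[op/idx]_(t < p.+1) \big[op/idx]_(s : {perm 'I_p}) F (lift_perm ord0 t s).
Proof. by rewrite pair_big /=; exact: reindex (onW_bij _ (lift_perm0_bij p)). Qed.

Lemma ltn_lift2 n (h : 'I_n) (x y : 'I_n.-1) : (lift h x < lift h y) = (x < y).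
Proof. by rewrite !ltnNge /= leq_bump2. Qed.

Lemma sum_ord_ltn p t : \sum_(w < p) (w < t) = minn p t.
Proof.
elim: p => [|p IH]; first by rewrite big_ord0 min0n.
by rewrite big_ord_recr /= IH; case: (ltnP p t) => H; lia.
Qed.

(* The top candidate placed at position [t] is inverted with exactly the [t]
   candidates ranked above it. *)
Lemma inversions_lift_perm0 p (t : 'I_p.+1) (s : {perm 'I_p}) :
  inversions (lift_perm ord0 t s) = t + inversions s.
Proof.
rewrite /inversions big_ord_recl big_ord_recl /= add0n; congr (_ + _).
  have -> : (t : nat) = minn p t by apply/esym/minn_idPr; rewrite -ltnS.
  rewrite -sum_ord_ltn [RHS](reindex_inj (@perm_inj _ s)) /=.
  apply: eq_bigr => b _; rewrite lift_perm_id lift_perm_lift /= /bump.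
  by case: (leqP t (s b)) => H; lia.
apply: eq_bigr => a _; rewrite big_ord_recl /= add0n.
by apply: eq_bigr => b _; rewrite !lift_perm_lift ltn_lift2.
Qed.

Lemma lift_perm0_at p (t : 'I_p.+1) (s : {perm 'I_p}) c v :
  [exists x : 'I_p.+1, (x == c.+1 :> nat) && (lift_perm ord0 t s x == v :> nat)] =
  (t != v :> nat) &&
  [exists x : 'I_p, (x == c :> nat) && (s x == (if t < v then v.-1 else v) :> nat)].
Proof.
apply/existsP/idP.
  case=> x /andP[/eqP xc /eqP xv].
  case: (unliftP ord0 x) xc xv => [x'|] -> //=.
  rewrite lift_perm_lift /= /bump /= add1n => [[xc]] xv.
  apply/andP; split; first by apply/eqP; case: (leqP t (s x')) xv => H; lia.
  apply/existsP; exists x'; rewrite xc eqxx /=.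
  by apply/eqP; case: (leqP t (s x')) xv => H; case: (ltnP t v) => H2; lia.
case/andP=> tv /existsP[x' /andP[/eqP xc /eqP xv]].
exists (lift ord0 x'); rewrite /= /bump /= add1n xc eqxx /= lift_perm_lift /= /bump.
by apply/eqP; move: xv; case: (leqP t (s x')) => H; case: (ltnP t v) => H2; lia.
Qed.

Lemma vote_count_lift p k c v :
  vote_count p.+1 k c.+1 v =
  \sum_(t < p.+1 | (t != v :> nat) && (t <= k))
     vote_count p (k - t) c (if t < v then v.-1 else v).
Proof.
rewrite /vote_count big_perm_lift0 [RHS]big_mkcond /=; apply: eq_bigr => t _.
under eq_bigr => s _ do rewrite inversions_lift_perm0 lift_perm0_at.
case: (t != v :> nat) => /=; last by rewrite big1 // => s _; rewrite andbF.
case: (leqP t k) => tk.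
  by apply: eq_bigr => s _; congr (_ && _); apply/eqP/eqP; lia.
by rewrite big1 // => s _; rewrite (_ : (t + inversions s == k) = false) //; apply/eqP; lia.
Qed.

Lemma sum_if_addn_leq (f : nat -> nat) n a k :
  \sum_(0 <= i < n) (if i + a <= k then f i else 0) = \sum_(i < minn n (k.+1 - a)) f i.
Proof.
rewrite -(big_mkord xpredT); elim: n => [|n IH]; first by rewrite min0n !big_geq.
rewrite big_nat_recr //= IH; case: (leqP (n + a) k) => H.
  have -> : minn n.+1 (k.+1 - a) = (minn n (k.+1 - a)).+1 by lia.
  by rewrite big_nat_recr //=; congr (_ + _); congr (f _); lia.
have -> : minn n.+1 (k.+1 - a) = minn n (k.+1 - a) by lia.
by rewrite addn0.
Qed.

(* [vote_count_lift] split at [t = v], in the form evaluated by the program. *)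
Lemma vote_count_split p k c v : v <= p ->
  vote_count p.+1 k c.+1 v =
  \sum_(i < minn v k.+1) vote_count p (k - i) c v.-1 +
  \sum_(i < minn p k - v) vote_count p (k - v - 1 - i) c v.
Proof.
move=> vp; rewrite vote_count_lift big_mkcond /= -(big_mkord xpredT (fun t =>
  if (t != v) && (t <= k) then vote_count p (k - t) c (if t < v then v.-1 else v) else 0)).
rewrite (@big_cat_nat _ _ _ v 0 p.+1) //=; last lia.
rewrite (@big_ltn_cond _ _ _ v p.+1) /=; last lia.
rewrite eqxx /= add0n; congr (_ + _).
  have := sum_if_addn_leq (fun i => vote_count p (k - i) c v.-1) v 0 k.
  rewrite subn0 => <-; apply: congr_big_nat => // t /and3P[_ _ tv].
  by rewrite addn0 tv (_ : (t != v) = true) //; apply/eqP; lia.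
have -> : minn p k - v = minn (p.+1 - v.+1) (k.+1 - v.+1) by lia.
rewrite -(sum_if_addn_leq (fun i => vote_count p (k - v - 1 - i) c v) _ v.+1 k).
rewrite -{1}(add0n v.+1) big_addn; apply: congr_big_nat => // t _.
rewrite (_ : (t + v.+1 != v) = true); last by apply/eqP; lia.
rewrite (_ : (t + v.+1 < v) = false); last by apply/negbTE; lia.
by case: leqP => H //=; congr vote_count; lia.
Qed.

Lemma vote_count1 k v : vote_count 1 k 0 v = (k == 0) && (v == 0).
Proof.
rewrite /vote_count (eq_bigr (fun _ => nat_of_bool ((k == 0) && (v == 0)))).
  by rewrite sum_nat_const card_Sn mul1n.
move=> r _.
have -> : inversions r = 0 by rewrite /inversions !big_ord_recl !big_ord0.
have -> : [exists x : 'I_1, (x == 0 :> nat) && (r x == v :> nat)] = (v == 0).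
  apply/existsP/idP => [[x /andP[_ /eqP <-]] | /eqP ->]; first by case: (r x) => [[]].
  by exists ord0; case: (r ord0) => [[]].
by rewrite eq_sym.
Qed.

Definition rev_perm n : {perm 'I_n} := perm (@rev_ord_inj n).
Definition rev_conj n (r : {perm 'I_n}) : {perm 'I_n} := (rev_perm n * r * rev_perm n)%g.

Lemma rev_conjE n r x : rev_conj r x = rev_ord (r (rev_ord x)) :> 'I_n.
Proof. by rewrite /rev_conj !permM !permE. Qed.

Lemma rev_conjK n : involutive (@rev_conj n).
Proof. by move=> r; apply/permP => x; rewrite !rev_conjE !rev_ordK. Qed.

Lemma ltn_rev_ord n (x y : 'I_n) : (rev_ord x < rev_ord y) = (y < x).
Proof. by rewrite /=; have := ltn_ord x; have := ltn_ord y; lia. Qed.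

Lemma inversions_rev_conj n (r : {perm 'I_n}) : inversions (rev_conj r) = inversions r.
Proof.
rewrite /inversions (reindex_inj (@rev_ord_inj n)) [RHS]exchange_big /=.
apply: eq_bigr => a _; rewrite (reindex_inj (@rev_ord_inj n)) /=.
by apply: eq_bigr => b _; rewrite !rev_conjE !rev_ordK !ltn_rev_ord.
Qed.

Lemma vote_count_rev n k c v : c < n -> v < n ->
  vote_count n k c v = vote_count n k (n.-1 - c) (n.-1 - v).
Proof.
move=> cn vn; rewrite [RHS]/vote_count (reindex_inj (can_inj (@rev_conjK n))).
apply: eq_bigr => r _; rewrite inversions_rev_conj; congr (_ && _).
apply/existsP/existsP => -[x /andP[/eqP xc /eqP xv]]; exists (rev_ord x);
  move: xv; rewrite rev_conjE ?rev_ordK /= => xv.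
  by rewrite xc xv; apply/andP; split; apply/eqP; lia.
have := ltn_ord (r (rev_ord x)); have := ltn_ord x.
by move=> *; apply/andP; split; apply/eqP; lia.
Qed.

Inductive stmt :=
  | SInstr of instr
  | SSeq of stmt & stmt
  | SWhile of nat & stmt.  (* [SWhile r b] : while M[r] <> 0 do b *)

Fixpoint code_size c :=
  match c with
  | SInstr _ => 1
  | SSeq a b => code_size a + code_size b
  | SWhile _ b => (code_size b).+2
  end.

(* [compile o c] is the code of [c] when loaded at address [o]: jumps are absolute. *)
Fixpoint compile (o : nat) (c : stmt) : program :=
  match c with
  | SInstr i => [:: i]
  | SSeq a b => compile o a ++ compile (o + code_size a) b
  | SWhile r b => IJz r (o + (code_size b).+2) :: rcons (compile o.+1 b) (IJmp o)
  end.

Lemma size_compile c o : size (compile o c) = code_size c.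
Proof.
elim: c o => [i|a IHa b IHb|r b IHb] o //=; first by rewrite size_cat IHa IHb.
by rewrite size_rcons IHb.
Qed.

Definition straight i :=
  match i with IJz _ _ | IJmp _ | IHalt => false | _ => true end.

Definition instr_eff i (M : memory) : memory :=
  match i with
  | IConst r n => upd M r n
  | IAdd r a b => upd M r (M a + M b)
  | ISub r a b => upd M r (M a - M b)
  | ILoad r a => upd M r (M (M a))
  | IStore a b => upd M (M a) (M b)
  | _ => M
  end.

Fixpoint steps p n st :=
  if n is n.+1 then if step p st is Some st' then steps p n st' else None
  else Some st.

Lemma steps_add p n1 n2 st st1 :
  steps p n1 st = Some st1 -> steps p (n1 + n2) st = steps p n2 st1.
Proof.
elim: n1 st => [|n IH] st /=; first by case=> ->.
by case: (step p st) => // st'; apply: IH.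
Qed.

(* [exec c M n M'] : run from memory [M], [c] terminates after [n] machine
   steps of its compiled code, with memory [M']. *)
Inductive exec : stmt -> memory -> nat -> memory -> Prop :=
  | ExecInstr i M : straight i -> exec (SInstr i) M 1 (instr_eff i M)
  | ExecSeq a b M M1 M2 n1 n2 :
      exec a M n1 M1 -> exec b M1 n2 M2 -> exec (SSeq a b) M (n1 + n2) M2
  | ExecWhileF r b M : M r = 0 -> exec (SWhile r b) M 1 M
  | ExecWhileT r b M M1 M2 n1 n2 : M r <> 0 ->
      exec b M n1 M1 -> exec (SWhile r b) M1 n2 M2 ->
      exec (SWhile r b) M (n1 + n2).+2 M2.

Lemma nth_cat_mid (pre l post : seq instr) i : i < size l ->
  nth IHalt (pre ++ l ++ post) (size pre + i) = nth IHalt l i.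
Proof. by move=> il; rewrite nth_cat ltnNge leq_addr /= addKn nth_cat il. Qed.

Lemma steps_exec c M n M' : exec c M n M' -> forall pre post,
  steps (pre ++ compile (size pre) c ++ post) n (size pre, M) =
  Some (size pre + code_size c, M').
Proof.
elim=> {c M n M'}.
- move=> i M Hi pre post /=.
  have := @nth_cat_mid pre [:: i] post 0 (ltn0Sn 0); rewrite addn0 => E.
  by rewrite /step E; case: i Hi E => //= *; rewrite addn1.
- move=> a b M M1 M2 n1 n2 _ IHa _ IHb pre post /=.
  rewrite (steps_add n2 (_ : _ = Some (size pre + code_size a, M1))).
    have := IHb (pre ++ compile (size pre) a) post.
    by rewrite size_cat size_compile -!catA addnA.
  by rewrite -catA; apply: IHa.
- move=> r b M Hr pre post /=.
  have := @nth_cat_mid pre (compile (size pre) (SWhile r b)) post 0.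
  by rewrite addn0 size_compile /= => E; rewrite /step E //= Hr eqxx.
- move=> r b M M1 M2 n1 n2 Hr _ IHb _ IHw pre post.
  set p := pre ++ _.
  have nth_loop i : i < (code_size b).+2 ->
      nth IHalt p (size pre + i) = nth IHalt (compile (size pre) (SWhile r b)) i.
    by move=> ib; rewrite nth_cat_mid // size_compile.
  have enter : step p (size pre, M) = Some ((size pre).+1, M).
    have := nth_loop 0 erefl; rewrite addn0 /step => -> /=.
    by have -> : (M r == 0) = false by apply/negbTE/eqP.
  have body := IHb (rcons pre (IJz r (size pre + (code_size b).+2)))
                   (IJmp (size pre) :: post).
  rewrite size_rcons -cats1 -catA /= in body.
  have back : step p ((size pre).+1 + code_size b, M1) = Some (size pre, M1).
    rewrite /step addSnnS nth_loop //= nth_rcons size_compile ltnn eqxx //.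
  rewrite -addnS; cbn [steps]; rewrite enter.
  rewrite (steps_add _ (_ : _ = Some ((size pre).+1 + code_size b, M1))).
    by cbn [steps]; rewrite back; exact: IHw.
  by rewrite -body /p /= -cats1 -catA.
Qed.

Lemma run_steps p n st st' fuel : steps p n st = Some st' -> step p st' = None ->
  n <= fuel -> run p fuel st = Some st'.2.
Proof.
elim: n fuel st => [|n IH] fuel st /=.
  by case=> -> H _; case: fuel => [|f] /=; rewrite H.
case E: (step p st) => [st1|] // H1 H2 Hn.
by case: fuel Hn => [|f] Hn //=; rewrite E; exact: IH.
Qed.

Lemma run_compile c M n M' fuel : exec c M n M' -> n <= fuel ->
  run (compile 0 c) fuel (0, M) = Some M'.
Proof.
move=> H Hn; have := steps_exec H [::] [::]; rewrite /= cats0 add0n => S.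
by apply: (run_steps S) => //=; rewrite nth_default // size_compile.
Qed.

Definition wp c (Q : nat -> memory -> Prop) M := exists n M', exec c M n M' /\ Q n M'.

Lemma wp_conseq c (Q1 Q : nat -> memory -> Prop) M :
  wp c Q1 M -> (forall n M', Q1 n M' -> Q n M') -> wp c Q M.
Proof. by case=> n [M' [H1 H2]] H; exists n, M'; split => //; apply: H. Qed.

Lemma wp_instr i Q M : straight i -> Q 1 (instr_eff i M) -> wp (SInstr i) Q M.
Proof. by move=> Hb HQ; exists 1, (instr_eff i M); split => //; constructor. Qed.

Lemma wp_seq a b Q M :
  wp a (fun n1 M1 => wp b (fun n2 M2 => Q (n1 + n2) M2) M1) M -> wp (SSeq a b) Q M.
Proof.
case=> n1 [M1 [H1 [n2 [M2 [H2 HQ]]]]].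
by exists (n1 + n2), M2; split => //; econstructor; eauto.
Qed.

Lemma wp_countdown r body N B (P : nat -> memory -> Prop) Q M :
  P 0 M -> M r = N ->
  (forall i M1, i < N -> P i M1 -> M1 r = N - i ->
     wp body (fun n M2 => n <= B /\ P i.+1 M2 /\ M2 r = N - i.+1) M1) ->
  (forall n M2, P N M2 -> n <= N * B.+2 + 1 -> Q n M2) ->
  wp (SWhile r body) Q M.
Proof.
move=> P0 HN Hb HQ.
suff: forall d i M1, d = N - i -> i <= N -> P i M1 -> M1 r = N - i ->
   exists n M2, exec (SWhile r body) M1 n M2 /\ n <= d * B.+2 + 1 /\ P N M2.
  move=> /(_ N 0 M); rewrite subn0 => /(_ erefl (leq0n _) P0 HN) [n [M2 [H1 [H2 H3]]]].
  by exists n, M2; split => //; apply: HQ.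
elim=> [|d IH] i M1 Hd Hi Pi Hr.
  have Ei : i = N by lia.
  by subst i; exists 1, M1; split; first by constructor; rewrite Hr subnn.
have iN : i < N by lia.
case: (Hb i M1 iN Pi Hr) => n1 [M2 [E1 [Hn1 [P2 Hr2]]]].
case: (IH i.+1 M2 _ iN P2 Hr2) => [|n2 [M3 [E2 [Hn2 P3]]]]; first by lia.
exists (n1 + n2).+2, M3; split; first by econstructor; eauto; rewrite Hr; lia.
by split => //; rewrite mulSn; lia.
Qed.

Lemma upd_eq (M : memory) r v x : x = r -> upd M r v x = v.
Proof. by move=> ->; rewrite /upd eqxx. Qed.

Lemma upd_neq (M : memory) r v x : x <> r -> upd M r v x = M x.
Proof. by move=> H; rewrite /upd; case: eqP. Qed.

Coercion SInstr : instr >-> stmt.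
Notation "c1 ;; c2" := (SSeq c1 c2) (at level 100, right associativity).

Notation rM := 0 (only parsing).
Notation rK := 1 (only parsing).
Notation rJ := 2 (only parsing).
Notation rI := 3 (only parsing).
Notation rOne := 4 (only parsing).
Notation rZero := 5 (only parsing).
Notation rPos := 6 (only parsing).
Notation rStride := 8 (only parsing).
Notation rOld := 9 (only parsing).
Notation rNew := 10 (only parsing).
Notation rSize := 11 (only parsing).
Notation rKCnt := 13 (only parsing).
Notation rKCur := 14 (only parsing).
Notation rRow := 15 (only parsing).
Notation rVCnt := 16 (only parsing).
Notation rV := 17 (only parsing).
Notation rAcc := 18 (only parsing).
Notation rSrc := 19 (only parsing).
Notation rSCnt := 20 (only parsing).
Notation rTmp := 21 (only parsing).
Notation rDst := 22 (only parsing).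
Notation rCand := 23 (only parsing).
Notation rLev := 24 (only parsing).

Ltac clear_mem_facts := repeat match goal with
  | H : ?M _ = _ |- _ =>
      lazymatch type of M with memory => clear H | nat -> nat => clear H end
  | H : forall _, _ |- _ => clear H
  end.
(* Side conditions on register numbers never need the memory facts, and [lia]
   is much faster without them. *)
Ltac lia_pure := clear_mem_facts; lia.

Ltac simpl_upd := repeat match goal with
  | |- context [upd ?M ?r ?v ?x] =>
    first [ rewrite (@upd_eq M r v x erefl)
          | rewrite (@upd_neq M r v x ltac:(discriminate))
          | rewrite (@upd_neq M r v x ltac:(lia_pure))
          | rewrite (@upd_eq M r v x ltac:(lia_pure)) ]
  end.
Ltac rewrite_mem := repeat match goal with
  | H : ?M ?x = _ |- context [?M ?x] =>
      lazymatch type of M with memory => rewrite H | nat -> nat => rewrite H end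
  end.
Ltac simpl_mem := repeat progress (simpl_upd; rewrite_mem).

Ltac wp_step :=
  match goal with
  | |- wp (SSeq (SInstr _) _) _ _ =>
      apply: wp_seq; apply: wp_instr; [reflexivity|]; cbn [instr_eff]; simpl_mem
  | |- wp (SInstr _) _ _ => apply: wp_instr; [reflexivity|]; cbn [instr_eff]; simpl_mem
  end.

Definition sum_down : stmt :=
  SWhile rSCnt (ILoad rTmp rSrc ;; IAdd rAcc rAcc rTmp ;;
                ISub rSrc rSrc rStride ;; ISub rSCnt rSCnt rOne).

Lemma sum_down_spec M N P0 S a0 (f : nat -> nat) :
  M rSCnt = N -> M rSrc = P0 -> M rAcc = a0 -> M rStride = S -> M rOne = 1 ->
  (forall i, i < N -> M (P0 - i * S) = f i) ->
  (forall i, i < N -> 23 < P0 - i * S) ->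
  wp sum_down (fun n M' => n <= N * 6 + 1 /\ M' rAcc = a0 + \sum_(i < N) f i /\
     M' rSrc = P0 - N * S /\ (forall x, x < 18 \/ 21 < x -> M' x = M x)) M.
Proof.
move=> hSCnt hSrc hAcc hStride hOne Hf Hp.
apply: (wp_countdown (N := N) (B := 4)
  (P := fun i M1 => M1 rAcc = a0 + \sum_(j < i) f j /\ M1 rSrc = P0 - i * S /\
          (forall x, x < 18 \/ 21 < x -> M1 x = M x))) => //.
- by rewrite big_ord0 addn0 hAcc mul0n subn0 hSrc.
- move=> i M1 iN [gAcc [gSrc gfr]] gSCnt.
  have gStride : M1 rStride = S by rewrite gfr ?hStride //; lia.
  have gOne : M1 rOne = 1 by rewrite gfr ?hOne //; lia.
  have hp := Hp i iN.
  have hl : M1 (P0 - i * S) = f i by rewrite gfr ?Hf //; lia.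
  do 4 wp_step.
  split=> //; split; last by lia.
  split; first by rewrite big_ord_recr /= addnA.
  split; first by rewrite mulSnr subnDA.
  by move=> x Hx; simpl_mem; apply: gfr.
Qed.

(* The algorithm keeps two tables, interleaved at bases 100 and 101: entry
   (k, v) of the table at [base] is stored at [base + 2 (k m + v)]. *)
Definition table (M : memory) m K base p c :=
  forall k v, k <= K -> v < p -> M (base + 2 * (k * m + v)) = vote_count p k c v.

Definition table_upto (M : memory) m K base p c k v :=
  forall k' v', k' <= K -> v' < p -> (k' < k \/ k' = k /\ v' < v) ->
    M (base + 2 * (k' * m + v')) = vote_count p k' c v'.

Notation table_bases ob nb := (ob = 100 /\ nb = 101 \/ ob = 101 /\ nb = 100).

Definition entry_low : stmt :=
  IConst rAcc 0 ;;
  IAdd rTmp rKCur rOne ;; ISub rDst rV rTmp ;; ISub rSCnt rV rDst ;;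
  IAdd rSrc rOld rRow ;; IAdd rSrc rSrc rV ;; IAdd rSrc rSrc rV ;;
  ISub rSrc rSrc rOne ;; ISub rSrc rSrc rOne ;;
  sum_down.

Definition entry_high : stmt :=
  IAdd rSrc rSrc rOne ;; IAdd rSrc rSrc rOne ;; ISub rSrc rSrc rStride ;;
  ISub rTmp rSize rKCur ;; ISub rTmp rSize rTmp ;; ISub rSCnt rTmp rV ;;
  sum_down.

Definition entry : stmt :=
  entry_low ;; entry_high ;;
  IAdd rTmp rNew rRow ;; IAdd rTmp rTmp rV ;; IAdd rTmp rTmp rV ;; IStore rTmp rAcc ;;
  IAdd rV rV rOne ;; ISub rVCnt rVCnt rOne.

Lemma entry_low_spec M m K ob p c k v :
  M rOne = 1 -> M rStride = 2 * m -> M rOld = ob -> M rKCur = k ->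
  M rRow = k * (2 * m) -> M rV = v ->
  100 <= ob -> p < m -> k <= K -> v <= p -> table M m K ob p c ->
  wp entry_low (fun n M' => n <= 6 * m + 10 /\
     M' rAcc = \sum_(i < minn v k.+1) vote_count p (k - i) c v.-1 /\
     M' rSrc = ob + k * (2 * m) + v + v - 1 - 1 - minn v k.+1 * (2 * m) /\
     (forall x, x < 18 \/ 22 < x -> M' x = M x)) M.
Proof.
move=> hOne hStride hOld hKCur hRow hV hob hp hk hv tb.
rewrite /entry_low; do 9 wp_step.
apply: wp_conseq.
  apply: (sum_down_spec (N := minn v k.+1) (P0 := ob + k * (2 * m) + v + v - 1 - 1)
           (S := 2 * m) (a0 := 0) (f := fun i => vote_count p (k - i) c v.-1));
    try by simpl_mem; lia.
  - move=> i Hi.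
    have : i * (2 * m) <= k * (2 * m) by apply: leq_mul => //; lia.
    move=> hint; simpl_mem.
    have -> : ob + k * (2 * m) + v + v - 1 - 1 - i * (2 * m) =
              ob + 2 * ((k - i) * m + v.-1) by nia.
    by rewrite tb //; lia.
  - move=> i Hi.
    have : i * (2 * m) <= k * (2 * m) by apply: leq_mul => //; lia.
    lia.
move=> n M' [Hn [eAcc [eSrc fr]]].
split; first by lia.
split; first by rewrite eAcc add0n.
by split=> // x Hx; rewrite fr; [simpl_mem | lia].
Qed.

Lemma entry_high_spec M m K ob p c k v a :
  M rOne = 1 -> M rStride = 2 * m -> M rSize = p -> M rKCur = k -> M rV = v ->
  M rAcc = a -> M rSrc = ob + k * (2 * m) + v + v - 1 - 1 - minn v k.+1 * (2 * m) ->
  100 <= ob -> p < m -> k <= K -> v <= p -> table M m K ob p c ->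
  wp entry_high (fun n M' => n <= 6 * m + 7 /\
     M' rAcc = a + \sum_(i < minn p k - v) vote_count p (k - v - 1 - i) c v /\
     (forall x, x < 18 \/ 22 < x -> M' x = M x)) M.
Proof.
move=> hOne hStride hSize hKCur hV hAcc hSrc hob hp hk hv tb.
rewrite /entry_high; do 6 wp_step.
apply: wp_conseq.
  apply: (sum_down_spec (N := minn p k - v)
     (P0 := ob + k * (2 * m) + v + v - 1 - 1 - minn v k.+1 * (2 * m) + 1 + 1 - 2 * m)
     (S := 2 * m) (a0 := a) (f := fun i => vote_count p (k - v - 1 - i) c v));
    try by simpl_mem; lia.
  - move=> i Hi.
    have -> : minn v k.+1 = v by lia.
    have : (v.+1 + i) * (2 * m) <= k * (2 * m) by apply: leq_mul => //; lia.
    move=> hint; simpl_mem.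
    have -> : ob + k * (2 * m) + v + v - 1 - 1 - v * (2 * m) + 1 + 1 - 2 * m - i * (2 * m)
       = ob + 2 * ((k - v - 1 - i) * m + v) by rewrite !mulnBl mul1n; lia_pure.
    by rewrite tb //; lia.
  - move=> i Hi.
    have -> : minn v k.+1 = v by lia.
    have : (v.+1 + i) * (2 * m) <= k * (2 * m) by apply: leq_mul => //; lia.
    lia.
move=> n M' [Hn [eAcc [_ fr]]].
split; first by lia.
by split=> // x Hx; rewrite fr; [simpl_mem | lia].
Qed.

Lemma entry_spec M m K ob nb p c k v :
  M rOne = 1 -> M rStride = 2 * m -> M rOld = ob -> M rNew = nb -> M rSize = p ->
  M rKCur = k -> M rRow = k * (2 * m) -> M rV = v ->
  100 <= ob -> 100 <= nb -> p < m -> k <= K -> v <= p -> table M m K ob p c ->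
  wp entry (fun n M' => n <= 12 * m + 23 /\ M' rV = v.+1 /\ M' rVCnt = M rVCnt - 1 /\
     M' (nb + 2 * (k * m + v)) = vote_count p.+1 k c.+1 v /\
     forall x, x <> nb + 2 * (k * m + v) -> x < 16 \/ 22 < x -> M' x = M x) M.
Proof.
move=> hOne hStride hOld hNew hSize hKCur hRow hV hob hnb hp hk hv tb.
rewrite /entry; apply: wp_seq; apply: wp_conseq.
  exact: (entry_low_spec hOne hStride hOld hKCur hRow hV hob hp hk hv tb).
move=> n1 M1 [Hn1 [gAcc [gSrc gfr]]].
have gOne : M1 rOne = 1 by rewrite gfr; [simpl_mem | lia].
have gStride : M1 rStride = 2 * m by rewrite gfr; [simpl_mem | lia].
have gNew : M1 rNew = nb by rewrite gfr; [simpl_mem | lia].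
have gSize : M1 rSize = p by rewrite gfr; [simpl_mem | lia].
have gKCur : M1 rKCur = k by rewrite gfr; [simpl_mem | lia].
have gRow : M1 rRow = k * (2 * m) by rewrite gfr; [simpl_mem | lia].
have gV : M1 rV = v by rewrite gfr; [simpl_mem | lia].
have gtb : table M1 m K ob p c by move=> k' v' *; rewrite gfr ?tb //; lia.
apply: wp_seq; apply: wp_conseq; first exact: (entry_high_spec gOne gStride gSize gKCur gV gAcc gSrc hob hp hk hv gtb).
move=> n2 M2 [Hn2 [fAcc ffr]].
have sOne : M2 rOne = 1 by rewrite ffr; [simpl_mem | lia].
have sNew : M2 rNew = nb by rewrite ffr; [simpl_mem | lia].
have sRow : M2 rRow = k * (2 * m) by rewrite ffr; [simpl_mem | lia].
have sV : M2 rV = v by rewrite ffr; [simpl_mem | lia].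
have sVCnt : M2 rVCnt = M rVCnt by rewrite ffr ?gfr //; lia.
do 6 wp_step.
split; first by lia.
split; first by lia.
split; first by lia.
split; first by rewrite vote_count_split.
by move=> x Hx Hx2; simpl_mem; rewrite ffr ?gfr //; lia.
Qed.

Lemma row_major_neq m k v k' v' : v < m -> v' < m -> (k' < k \/ k' = k /\ v' < v) ->
  k' * m + v' <> k * m + v.
Proof.
move=> vm vm' [lt_k|[-> lt_v]]; last by lia.
have : k'.+1 * m <= k * m by apply: leq_mul.
by rewrite mulSn; lia.
Qed.

Definition row_loop : stmt := SWhile rVCnt entry.

Lemma row_loop_spec M m K ob nb p c k :
  M rOne = 1 -> M rStride = 2 * m -> M rOld = ob -> M rNew = nb -> M rSize = p ->
  M rKCur = k -> M rRow = k * (2 * m) -> M rVCnt = p.+1 -> M rV = 0 ->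
  table_bases ob nb -> p < m -> k <= K ->
  table M m K ob p c -> table_upto M m K nb p.+1 c.+1 k 0 ->
  wp row_loop (fun n M' => n <= m * (12 * m + 25) + 1 /\
     (forall x, x < 16 \/ 22 < x < 98 -> M' x = M x) /\
     table M' m K ob p c /\ table_upto M' m K nb p.+1 c.+1 k.+1 0) M.
Proof.
move=> hOne hStride hOld hNew hSize hKCur hRow hVCnt hV hobnb hp hk tb pt.
apply: (wp_countdown (N := p.+1) (B := 12 * m + 23)
  (P := fun i M1 => M1 rV = i /\ (forall x, x < 16 \/ 22 < x < 98 -> M1 x = M x) /\
          table M1 m K ob p c /\ table_upto M1 m K nb p.+1 c.+1 k i)) => //.
- move=> i M1 ip [gV [gfr [gtb gpt]]] gVCnt.
  have gOne : M1 rOne = 1 by rewrite gfr //; lia.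
  have gStride : M1 rStride = 2 * m by rewrite gfr //; lia.
  have gOld : M1 rOld = ob by rewrite gfr //; lia.
  have gNew : M1 rNew = nb by rewrite gfr //; lia.
  have gSize : M1 rSize = p by rewrite gfr //; lia.
  have gKCur : M1 rKCur = k by rewrite gfr //; lia.
  have gRow : M1 rRow = k * (2 * m) by rewrite gfr //; lia.
  apply: wp_conseq.
    by apply: (entry_spec (K := K) (c := c) gOne gStride gOld gNew gSize gKCur gRow gV) => //; lia.
  move=> n M2 [Hn [fV [fVCnt [fst ffr]]]].
  split=> //; split; last by rewrite fVCnt gVCnt; lia.
  split=> //; split; first by move=> x Hx; rewrite ffr ?gfr //; lia.
  split; first by move=> k' v' Hk Hv; rewrite ffr ?gtb //; lia.
  move=> k' v' Hk Hv Hc.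
  have [[-> ->] | earlier] : (k' = k /\ v' = i) \/ (k' < k \/ k' = k /\ v' < i) by lia.
    by [].
  have := @row_major_neq m k i k' v' ltac:(lia) ltac:(lia) earlier.
  by move=> ne; rewrite ffr ?gpt //; lia.
- move=> n M2 [_ [gfr [gtb gpt]]] Hn; split.
    by apply: leq_trans Hn _; rewrite leq_add2r; apply: leq_mul; lia.
  by do 2 split => //; move=> k' v' Hk Hv Hc; apply: gpt => //; lia.
Qed.

Definition row : stmt :=
  IAdd rVCnt rSize rOne ;; IConst rV 0 ;; row_loop ;;
  IAdd rKCur rKCur rOne ;; IAdd rRow rRow rStride ;; ISub rKCnt rKCnt rOne.

Lemma row_spec M m K ob nb p c k :
  M rOne = 1 -> M rStride = 2 * m -> M rOld = ob -> M rNew = nb -> M rSize = p ->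
  M rKCur = k -> M rRow = k * (2 * m) -> M rKCnt = K.+1 - k ->
  table_bases ob nb -> p < m -> k <= K ->
  table M m K ob p c -> table_upto M m K nb p.+1 c.+1 k 0 ->
  wp row (fun n M' => n <= m * (12 * m + 25) + 6 /\
     M' rKCur = k.+1 /\ M' rRow = k.+1 * (2 * m) /\ M' rKCnt = K.+1 - k.+1 /\
     (forall x, x < 13 \/ 22 < x < 98 -> M' x = M x) /\
     table M' m K ob p c /\ table_upto M' m K nb p.+1 c.+1 k.+1 0) M.
Proof.
move=> hOne hStride hOld hNew hSize hKCur hRow hKCnt hobnb hp hk tb pt.
rewrite /row; do 2 wp_step.
apply: wp_seq; apply: wp_conseq.
  apply: (@row_loop_spec _ m K ob nb p c k); try by simpl_mem; lia.
  + by move=> k' v' Hk Hv; simpl_mem; apply: tb.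
  + by move=> k' v' Hk Hv Hc; simpl_mem; apply: pt.
move=> n M2 [Hn [ffr [ftb fpt]]].
have eOne : M2 rOne = 1 by rewrite ffr; [simpl_mem | lia].
have eStride : M2 rStride = 2 * m by rewrite ffr; [simpl_mem | lia].
have eKCur : M2 rKCur = k by rewrite ffr; [simpl_mem | lia].
have eRow : M2 rRow = k * (2 * m) by rewrite ffr; [simpl_mem | lia].
have eKCnt : M2 rKCnt = K.+1 - k by rewrite ffr; [simpl_mem | lia].
do 3 wp_step.
split; first by lia.
split; first by lia.
split; first by rewrite mulSn; lia.
split; first by lia.
split; first by move=> x Hx; simpl_mem; rewrite ffr; [simpl_mem | lia].
by split => k' v' *; simpl_mem; [apply: ftb | apply: fpt].
Qed.

Definition level : stmt :=
  IAdd rKCnt rK rOne ;; IConst rKCur 0 ;; IConst rRow 0 ;; SWhile rKCnt row ;;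
  IAdd rTmp rOld rZero ;; IAdd rOld rNew rZero ;; IAdd rNew rTmp rZero ;;
  IAdd rSize rSize rOne.

Definition level_cost m K := K.+1 * (m * (12 * m + 25) + 8) + 8.

Lemma level_spec M m K ob nb p c :
  M rK = K -> M rOne = 1 -> M rZero = 0 -> M rStride = 2 * m -> M rOld = ob ->
  M rNew = nb -> M rSize = p -> table_bases ob nb -> p < m -> table M m K ob p c ->
  wp level (fun n M' => n <= level_cost m K /\
     M' rOld = nb /\ M' rNew = ob /\ M' rSize = p.+1 /\ M' rRow = K.+1 * (2 * m) /\
     (forall x, x < 9 \/ 22 < x < 98 -> M' x = M x) /\ table M' m K nb p.+1 c.+1) M.
Proof.
move=> hK hOne hZero hStride hOld hNew hSize hobnb hp tb.
rewrite /level; do 3 wp_step.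
apply: wp_seq.
apply: (wp_countdown (N := K.+1) (B := m * (12 * m + 25) + 6)
  (P := fun i M1 => M1 rKCur = i /\ M1 rRow = i * (2 * m) /\
          (forall x, x < 13 \/ 22 < x < 98 -> M1 x = M x) /\
          table M1 m K ob p c /\ table_upto M1 m K nb p.+1 c.+1 i 0)).
- do 3 split=> //; first by move=> x Hx; simpl_mem.
  by split=> [k v Hk Hv | k v Hk Hv Hc]; simpl_mem; [apply: tb | lia].
- by simpl_mem; lia.
- move=> i M1 iK [gKCur [gRow [gfr [gtb gpt]]]] gKCnt.
  have gOne : M1 rOne = 1 by rewrite gfr //; lia.
  have gStride : M1 rStride = 2 * m by rewrite gfr //; lia.
  have gOld : M1 rOld = ob by rewrite gfr //; lia.
  have gNew : M1 rNew = nb by rewrite gfr //; lia.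
  have gSize : M1 rSize = p by rewrite gfr //; lia.
  apply: wp_conseq.
    by apply: (row_spec (c := c) gOne gStride gOld gNew gSize gKCur gRow gKCnt) => //; lia.
  move=> n M2 [Hn [fKCur [fRow [fKCnt [ffr [ftb fpt]]]]]].
  split; first by lia.
  split=> //; split=> //; split=> //; split=> //.
  by move=> x Hx; rewrite ffr ?gfr //; lia.
- move=> n M2 [gKCur [gRow [gfr [gtb gpt]]]] Hn.
  have eOne : M2 rOne = 1 by rewrite gfr //; lia.
  have eZero : M2 rZero = 0 by rewrite gfr //; lia.
  have eOld : M2 rOld = ob by rewrite gfr //; lia.
  have eNew : M2 rNew = nb by rewrite gfr //; lia.
  have eSize : M2 rSize = p by rewrite gfr //; lia.
  do 4 wp_step.
  do 4 (split; first by rewrite /level_cost; lia).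
  split=> //; split; first by move=> x Hx; simpl_mem; rewrite gfr //; lia.
  by move=> k v Hk Hv; simpl_mem; apply: gpt => //; lia.
Qed.

Definition rev_row_loop : stmt :=
  SWhile rVCnt (ILoad rTmp rSrc ;; IStore rDst rTmp ;;
                ISub rSrc rSrc rOne ;; ISub rSrc rSrc rOne ;;
                IAdd rDst rDst rOne ;; IAdd rDst rDst rOne ;; ISub rVCnt rVCnt rOne).

Lemma rev_row_loop_spec M m K ob nb n k :
  M rOne = 1 -> M rVCnt = n -> M rSrc = ob + k * (2 * m) + n + n - 1 - 1 ->
  M rDst = nb + k * (2 * m) -> table_bases ob nb -> 1 <= n <= m -> k <= K ->
  table M m K ob n n.-1 -> table_upto M m K nb n 0 k 0 ->
  wp rev_row_loop (fun c M' => c <= n * 9 + 1 /\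
     (forall x, x < 16 \/ 22 < x < 98 -> M' x = M x) /\
     table M' m K ob n n.-1 /\ table_upto M' m K nb n 0 k.+1 0) M.
Proof.
move=> hOne hVCnt hSrc hDst hobnb hn hk tb pt.
apply: (wp_countdown (N := n) (B := 7)
  (P := fun i M1 => M1 rSrc = ob + k * (2 * m) + n + n - 1 - 1 - 2 * i /\
          M1 rDst = nb + k * (2 * m) + 2 * i /\
          (forall x, x < 16 \/ 22 < x < 98 -> M1 x = M x) /\
          table M1 m K ob n n.-1 /\ table_upto M1 m K nb n 0 k i)) => //.
- by split; [lia | split; [lia |]].
- move=> i M1 ip [gSrc [gDst [gfr [gtb gpt]]]] gVCnt.
  have gOne : M1 rOne = 1 by rewrite gfr //; lia.
  have hl : M1 (ob + k * (2 * m) + n + n - 1 - 1 - 2 * i) = vote_count n k 0 i.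
    have -> : ob + k * (2 * m) + n + n - 1 - 1 - 2 * i =
              ob + 2 * (k * m + (n.-1 - i)) by lia.
    rewrite gtb; [|lia|lia].
    by rewrite (@vote_count_rev n k 0 i) ?subn0 //; lia.
  do 7 wp_step.
  split; first by lia.
  split; last by lia.
  split; first by lia.
  split; first by lia.
  split; first by move=> x Hx; simpl_mem; apply: gfr.
  split; first by move=> k' v' Hk Hv; simpl_mem; apply: gtb.
  move=> k' v' Hk Hv Hc.
  have [[-> ->] | earlier] : (k' = k /\ v' = i) \/ (k' < k \/ k' = k /\ v' < i) by lia.
    by simpl_mem.
  have := @row_major_neq m k i k' v' ltac:(lia) ltac:(lia) earlier.
  by move=> ne; simpl_mem; apply: gpt.
- move=> c M2 [_ [_ [gfr [gtb gpt]]]] Hc; do 3 (split => //).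
  by move=> k' v' Hk Hv Hc'; apply: gpt => //; lia.
Qed.

Definition rev_row : stmt :=
  IAdd rVCnt rSize rZero ;;
  IAdd rSrc rOld rRow ;; IAdd rSrc rSrc rSize ;; IAdd rSrc rSrc rSize ;;
  ISub rSrc rSrc rOne ;; ISub rSrc rSrc rOne ;;
  IAdd rDst rNew rRow ;; rev_row_loop ;;
  IAdd rRow rRow rStride ;; ISub rKCnt rKCnt rOne.

Lemma rev_row_spec M m K ob nb n k :
  M rOne = 1 -> M rZero = 0 -> M rStride = 2 * m -> M rOld = ob -> M rNew = nb ->
  M rSize = n -> M rRow = k * (2 * m) -> M rKCnt = K.+1 - k ->
  table_bases ob nb -> 1 <= n <= m -> k <= K ->
  table M m K ob n n.-1 -> table_upto M m K nb n 0 k 0 ->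
  wp rev_row (fun c M' => c <= n * 9 + 10 /\
     M' rRow = k.+1 * (2 * m) /\ M' rKCnt = K.+1 - k.+1 /\
     (forall x, x < 13 \/ 22 < x < 98 -> M' x = M x) /\
     table M' m K ob n n.-1 /\ table_upto M' m K nb n 0 k.+1 0) M.
Proof.
move=> hOne hZero hStride hOld hNew hSize hRow hKCnt hobnb hn hk tb pt.
rewrite /rev_row; do 7 wp_step.
apply: wp_seq; apply: wp_conseq.
  apply: (@rev_row_loop_spec _ m K ob nb n k); try by simpl_mem; lia.
  + by move=> k' v' Hk Hv; simpl_mem; apply: tb.
  + by move=> k' v' Hk Hv Hc; simpl_mem; apply: pt.
move=> c M2 [Hc [ffr [ftb fpt]]].
have eOne : M2 rOne = 1 by rewrite ffr; [simpl_mem | lia].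
have eStride : M2 rStride = 2 * m by rewrite ffr; [simpl_mem | lia].
have eRow : M2 rRow = k * (2 * m) by rewrite ffr; [simpl_mem | lia].
have eKCnt : M2 rKCnt = K.+1 - k by rewrite ffr; [simpl_mem | lia].
do 2 wp_step.
split; first by lia.
split; first by rewrite mulSn; lia.
split; first by lia.
split; first by move=> x Hx; simpl_mem; rewrite ffr; [simpl_mem | lia].
by split => k' v' *; simpl_mem; [apply: ftb | apply: fpt].
Qed.

Definition rev_table : stmt :=
  IAdd rKCnt rK rOne ;; IConst rRow 0 ;; SWhile rKCnt rev_row ;;
  IAdd rTmp rOld rZero ;; IAdd rOld rNew rZero ;; IAdd rNew rTmp rZero.

Lemma rev_table_spec M m K ob nb n :
  M rK = K -> M rOne = 1 -> M rZero = 0 -> M rStride = 2 * m -> M rOld = ob ->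
  M rNew = nb -> M rSize = n -> table_bases ob nb -> 1 <= n <= m ->
  table M m K ob n n.-1 ->
  wp rev_table (fun c M' => c <= K.+1 * (n * 9 + 12) + 6 /\
     M' rOld = nb /\ M' rNew = ob /\ M' rSize = n /\ M' rRow = K.+1 * (2 * m) /\
     (forall x, x < 9 \/ 22 < x < 98 -> M' x = M x) /\ table M' m K nb n 0) M.
Proof.
move=> hK hOne hZero hStride hOld hNew hSize hobnb hn tb.
rewrite /rev_table; do 2 wp_step.
apply: wp_seq.
apply: (wp_countdown (N := K.+1) (B := n * 9 + 10)
  (P := fun i M1 => M1 rRow = i * (2 * m) /\
          (forall x, x < 13 \/ 22 < x < 98 -> M1 x = M x) /\
          table M1 m K ob n n.-1 /\ table_upto M1 m K nb n 0 i 0)).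
- do 2 split=> //; first by move=> x Hx; simpl_mem.
  by split=> [k v Hk Hv | k v Hk Hv Hc]; simpl_mem; [apply: tb | lia].
- by simpl_mem; lia.
- move=> i M1 iK [gRow [gfr [gtb gpt]]] gKCnt.
  have gOne : M1 rOne = 1 by rewrite gfr //; lia.
  have gZero : M1 rZero = 0 by rewrite gfr //; lia.
  have gStride : M1 rStride = 2 * m by rewrite gfr //; lia.
  have gOld : M1 rOld = ob by rewrite gfr //; lia.
  have gNew : M1 rNew = nb by rewrite gfr //; lia.
  have gSize : M1 rSize = n by rewrite gfr //; lia.
  apply: wp_conseq.
    by apply: (rev_row_spec gOne gZero gStride gOld gNew gSize gRow gKCnt) => //; lia.
  move=> c M2 [Hc [fRow [fKCnt [ffr [ftb fpt]]]]].
  split; first by lia.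
  split=> //; split=> //; split=> //.
  by move=> x Hx; rewrite ffr ?gfr //; lia.
- move=> c M2 [gRow [gfr [gtb gpt]]] Hc.
  have eZero : M2 rZero = 0 by rewrite gfr //; lia.
  have eOld : M2 rOld = ob by rewrite gfr //; lia.
  have eNew : M2 rNew = nb by rewrite gfr //; lia.
  have eSize : M2 rSize = n by rewrite gfr //; lia.
  do 3 wp_step.
  do 4 (split; first by lia).
  split=> //; split; first by move=> x Hx; simpl_mem; rewrite gfr //; lia.
  by move=> k v Hk Hv; simpl_mem; apply: gpt => //; lia.
Qed.

Definition levels : stmt := SWhile rLev (level ;; ISub rLev rLev rOne).

Lemma levels_spec M m K N p0 c0 ob0 nb0 :
  M rK = K -> M rOne = 1 -> M rZero = 0 -> M rStride = 2 * m -> M rOld = ob0 ->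
  M rNew = nb0 -> M rSize = p0 -> M rLev = N ->
  table_bases ob0 nb0 -> p0 + N <= m -> table M m K ob0 p0 c0 ->
  wp levels (fun n M' => n <= N * (level_cost m K).+3 + 1 /\
    (exists ob nb, M' rOld = ob /\ M' rNew = nb /\ table_bases ob nb /\
       table M' m K ob (p0 + N) (c0 + N)) /\
    M' rSize = p0 + N /\ (M' rRow = K.+1 * (2 * m) \/ M' rRow = M rRow) /\
    (forall x, x < 9 \/ x = 23 -> M' x = M x)) M.
Proof.
move=> hK hOne hZero hStride hOld hNew hSize hLev hobnb hpN tb.
apply: (wp_countdown (N := N) (B := (level_cost m K).+1)
  (P := fun i M1 => (exists ob nb, M1 rOld = ob /\ M1 rNew = nb /\
         table_bases ob nb /\ table M1 m K ob (p0 + i) (c0 + i)) /\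
         M1 rSize = p0 + i /\ (M1 rRow = K.+1 * (2 * m) \/ M1 rRow = M rRow) /\
         (forall x, x < 9 \/ x = 23 -> M1 x = M x))) => //.
- split; first by exists ob0, nb0; rewrite !addn0.
  by rewrite addn0; split => //; split; [right|].
- move=> i M1 iN [[ob [nb [gOld [gNew [gbases gtb]]]]] [gSize [gRow gfr]]] gLev.
  have gK : M1 rK = K by rewrite gfr //; lia.
  have gOne : M1 rOne = 1 by rewrite gfr //; lia.
  have gZero : M1 rZero = 0 by rewrite gfr //; lia.
  have gStride : M1 rStride = 2 * m by rewrite gfr //; lia.
  apply: wp_seq; apply: wp_conseq.
    by apply: (level_spec (c := c0 + i) gK gOne gZero gStride gOld gNew gSize) => //; lia.
  move=> n M2 [Hn [fOld [fNew [fSize [fRow [ffr ftb]]]]]].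
  have eOne : M2 rOne = 1 by rewrite ffr //; lia.
  have eLev : M2 rLev = N - i by rewrite ffr //; lia.
  wp_step.
  split; first by lia.
  split; last by lia.
  split.
    exists nb, ob; split=> //; split=> //; split; first by lia.
    by move=> k v Hk Hv; simpl_mem; rewrite !addnS; apply: ftb => //; lia.
  split; first by lia.
  split; first by left.
  by move=> x Hx; simpl_mem; rewrite ffr ?gfr //; lia.
Qed.

Definition init : stmt :=
  IConst rOne 1 ;; ISub rCand rJ rOne ;; ISub rPos rI rOne ;;
  ISub rLev rM rCand ;; ISub rLev rLev rOne ;;
  IAdd rStride rM rM ;; IConst rOld 100 ;; IConst rNew 101 ;; IConst rSize 1 ;;
  IConst rTmp 1 ;; IStore rOld rTmp.

Lemma init_spec m k j i : 0 < m ->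
  wp init (fun n M => n = 11 /\ M rM = m /\ M rK = k /\ M rOne = 1 /\ M rZero = 0 /\
     M rPos = i - 1 /\ M rCand = j - 1 /\ M rLev = m - (j - 1) - 1 /\
     M rStride = 2 * m /\ M rOld = 100 /\ M rNew = 101 /\ M rSize = 1 /\
     table M m k 100 1 0) (init4 m k j i).2.
Proof.
move=> hm; set M0 := (init4 m k j i).2.
have hM : M0 rM = m by [].
have hK : M0 rK = k by [].
have hJ : M0 rJ = j by [].
have hI : M0 rI = i by [].
have hz : forall x, 3 < x -> M0 x = 0 by move=> [|[|[|[|x]]]].
have hZero : M0 rZero = 0 by apply: hz.
clearbody M0; rewrite /init; do 11 wp_step.
do 12 (split; first by lia).
move=> k' v' Hk Hv; have -> : v' = 0 by lia.
case: k' Hk => [|k'] Hk; first by simpl_mem; rewrite vote_count1.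
have : 0 < k'.+1 * m by rewrite muln_gt0.
by move=> pos; simpl_mem; rewrite hz ?vote_count1 //; lia.
Qed.

Lemma main_cost_bound m K n c : 1 <= m -> K.+1 <= m * m -> n.-1 + c <= m -> n <= m ->
  (n.-1 + c) * (level_cost m K).+3 + K.+1 * (n * 9 + 12) + 25 <= 100 * m ^ 5 + 100.
Proof.
move=> hm hkm hnc hn.
have row_cost : m * (12 * m + 25) + 8 <= 45 * (m * m) by nia.
have level : level_cost m K <= m * m * (45 * (m * m)) + 8.
  by rewrite /level_cost leq_add2r; apply: leq_mul.
have levels : (n.-1 + c) * (level_cost m K).+3 <= m * (m * m * (45 * (m * m)) + 11).
  by apply: leq_mul => //; lia.
have rev : K.+1 * (n * 9 + 12) <= m * m * (21 * m) by apply: leq_mul => //; lia.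
have -> : m ^ 5 = m * (m * m * (m * m)) by rewrite !expnS expn0 muln1 !mulnA.
nia.
Qed.

Definition main : stmt :=
  init ;; levels ;; rev_table ;; IAdd rLev rCand rZero ;; levels ;;
  IAdd rTmp rOld rRow ;; ISub rTmp rTmp rStride ;;
  IAdd rTmp rTmp rPos ;; IAdd rTmp rTmp rPos ;; ILoad rM rTmp.

Lemma main_spec m k j i :
  0 < m -> k.+1 <= m * m -> 1 <= j <= m -> 1 <= i <= m ->
  wp main (fun n M => n <= 100 * m ^ 5 + 100 /\ M rM = T m k j i) (init4 m k j i).2.
Proof.
move=> hm hkm hj hi.
rewrite /main; apply: wp_seq; apply: wp_conseq; first exact: init_spec.
move=> _ M0 [-> [hM [hK [hOne [hZero [hPos [hCand [hLev [hStride [hOld [hNew [hSize tb]]]]]]]]]]]].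
apply: wp_seq; apply: wp_conseq.
  by apply: (levels_spec (c0 := 0) hK hOne hZero hStride hOld hNew hSize hLev) => //; lia.
move=> n1 M1 [Hn1 [[ob [nb [gOld [gNew [gbases gtb]]]]] [gSize [_ gfr]]]].
have gK : M1 rK = k by rewrite gfr; [simpl_mem | lia].
have gOne : M1 rOne = 1 by rewrite gfr; [simpl_mem | lia].
have gZero : M1 rZero = 0 by rewrite gfr; [simpl_mem | lia].
have gPos : M1 rPos = i - 1 by rewrite gfr; [simpl_mem | lia].
have gStride : M1 rStride = 2 * m by rewrite gfr; [simpl_mem | lia].
have gCand : M1 rCand = j - 1 by rewrite gfr; [simpl_mem | lia].
have gSize' : M1 rSize = m - (j - 1) by lia.
have tb1 : table M1 m k ob (m - (j - 1)) (m - (j - 1)).-1.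
  by move=> k' v' Hk Hv; rewrite gtb; [congr vote_count | |]; lia.
apply: wp_seq; apply: wp_conseq.
  by apply: (rev_table_spec gK gOne gZero gStride gOld gNew gSize' gbases _ tb1); lia.
move=> n2 M2 [Hn2 [fOld [fNew [fSize [fRow [ffr ftb]]]]]].
have eK : M2 rK = k by rewrite ffr //; lia.
have eOne : M2 rOne = 1 by rewrite ffr //; lia.
have eZero : M2 rZero = 0 by rewrite ffr //; lia.
have ePos : M2 rPos = i - 1 by rewrite ffr //; lia.
have eStride : M2 rStride = 2 * m by rewrite ffr //; lia.
have eCand : M2 rCand = j - 1 by rewrite ffr //; lia.
wp_step; apply: wp_seq; apply: wp_conseq.
  apply: (@levels_spec _ m k (j - 1) (m - (j - 1)) 0 nb ob); try by simpl_mem; lia.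
  by move=> k' v' Hk Hv; simpl_mem; apply: ftb.
move=> n3 M3 [Hn3 [[ob' [nb' [dOld [dNew [dbases dtb]]]]] [dSize [dRow dfr]]]].
have dPos : M3 rPos = i - 1 by rewrite dfr; [simpl_mem | lia].
have dStride : M3 rStride = 2 * m by rewrite dfr; [simpl_mem | lia].
have dRow' : M3 rRow = k.+1 * (2 * m) by case: dRow => ->; simpl_mem.
do 5 wp_step; split.
  have := main_cost_bound hm hkm (_ : (m - (j - 1)).-1 + (j - 1) <= m) (_ : m - (j - 1) <= m).
  by move=> /(_ ltac:(lia) ltac:(lia)) bound; apply: leq_trans bound; lia.
have -> : ob' + k.+1 * (2 * m) - 2 * m + (i - 1) + (i - 1) =
          ob' + 2 * (k * m + (i - 1)) by lia.
by rewrite dtb; [rewrite T_vote_count; congr vote_count | |]; lia.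
Qed.

Theorem lemma2 :
  exists (p : program) (c d : nat),
    forall m k j i : nat,
      0 < m -> k <= m * (m - 1) %/ 2 ->
      1 <= j <= m -> 1 <= i <= m ->
      exists M : memory,
        run p (c * m ^ d + c) (init4 m k j i) = Some M /\ M 0 = T m k j i.
Proof.
exists (compile 0 main), 100, 5 => m k j i hm hk hj hi.
have hkm : k.+1 <= m * m.
  have : m * (m - 1) %/ 2 <= m * (m - 1) by apply: leq_div.
  by nia.
have [n [M [run_main [cost out]]]] := main_spec hm hkm hj hi.
by exists M; split => //; exact: run_compile run_main cost.
Qed.
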